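(* Let $P$ be a decision protocol for the context $\gamma$, and let $S$ and $T$ be indexical sets of agents in $\mathcal{I}_{P,\gamma}$ such that (a) for all points $(r,m)$ and agents $i,j$, if $i\in T(r,m)$ and $j\in T(r,m)$ then there exists a run $r'$ of $\mathcal{I}_{P,\gamma}$ with $(r,m)\sim_i(r',m)$, $(r,m)\sim_j(r',m)$, and $i\in S(r',m)$, $j\in S(r',m)$; (b) $S\subseteq T$ is valid in $\mathcal{I}_{P,\gamma}$; and (c) $T\neq\emptyset\Rightarrow S\neq\emptyset$ is valid in $\mathcal{I}_{P,\gamma}$. Then if SBA($S$) is valid in $\mathcal{I}_{P,\gamma}$, SBA($T$) is valid in $\mathcal{I}_{P,\gamma}$.
   Context: Agents are $\mathrm{Agt}=\{1,\dots,n\}$; $V$ is a set of decision values; agent $i$'s actions are $A_i=\{\mathtt{noop}\}\cup\{\mathtt{decide}_i(v):v\in V\}$. An information exchange $\mathcal{E}$ assigns to each agent $i$ a tuple $(L_i,I_i,M_i,\mu_i,\delta_i)$: local states $L_i$, initial states $I_i\subseteq L_i$, messages $M_i\ni\bot$, $\mu_i:L_i\times A_i\to(\mathrm{Agt}\to M_i)$, and $\delta_i:L_i\times A_i\times\prod_jM_j\to L_i$; local states have the form $\langle\mathit{init}_i,\mathit{time}_i,\dots\rangle$ (possibly also a special state $\mathit{crashed}$) with $\mathit{init}_i\in V$ the initial preference, $\delta_i$ preserving $\mathit{init}_i$ and incrementing $\mathit{time}_i$. A decision protocol $P$ is a family $P_i:L_i\to A_i$. A failure model $\mathcal{F}=(L^*_e,I_e,\delta_e,\mathit{Adv})$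 has environment states, nonempty initial ones $I_e$, update $\delta_e:L^*_e\times\prod_iA_i\to L^*_e$, and a nonempty set $\mathit{Adv}$ of adversaries $(\Delta^t,\Delta^r,\Delta^s)$ with $\Delta^t,\Delta^r:\mathbb{N}\times\mathrm{Agt}\times\mathrm{Agt}\times\bigcup_iM_i\to\bigcup_iM_i$ and $\Delta^s_i:\mathbb{N}\times L_i\to L_i$ (not changing $\mathit{time}_i$). A context is $\gamma=(\mathcal{E},\mathcal{F})$. The runs of $\mathcal{I}_{P,\gamma}$ are the $r$ with $r(0)=((s_e,\alpha),s_1,\dots,s_n)$, $s_e\in I_e$, $\alpha=(\Delta^t,\Delta^r,\Delta^s)\in\mathit{Adv}$, $s_i\in I_i$, and if $r(k)=((s_e,\alpha),s_1,\dots,s_n)$ then $r(k+1)=((\delta_e(s_e,(a_1,\dots,a_n)),\alpha),s'_1,\dots,s'_n)$ where $a_i=P_i(s_i)$ (the action of $i$ at time $k$), $m_{i,j}=\mu_i(s_i,a_i)(j)$, $m'_{i,j}=\Delta^r(k,i,j,\Delta^t(k,i,j,m_{i,j}))$, $s^*_j=\delta_j(s_j,a_j,(m'_{1,j},\dots,m'_{n,j}))$, $s'_j=\Delta^s_j(k,s^*_j)$. $r_i(m)$ is agent $i$'s local state at time $m$ and $(r,m)\sim_i(r',m')$ iff $r_i(m)=r'_i(m')$. An indexical set $S$ assigns a set $S(r,m)\subseteq\mathrm{Agt}$ to each point; formulas such as $S\subseteq T$, $S\neq\emptyset$ are evaluated pointwise, and validity means truth at all points. SBA($S$) is valid in $\mathcal{I}_{P,\gamma}$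 if in every run $r$: (Unique-Decision) each agent $i$ performs an action $\mathtt{decide}_i(v)$ at most once; (Simultaneous-Agreement($S$)) if $i\in S(r,m)$ performs $\mathtt{decide}_i(v)$ at time $m$ then every $j\in S(r,m)$ performs $\mathtt{decide}_j(v)$ at time $m$; (Validity($S$)) if $i\in S(r,m)$ performs $\mathtt{decide}_i(v)$ at time $m$ then some agent $j$ has $\mathit{init}_j=v$ in $r$. *)

From mathcomp Require Import all_boot.
Set Implicit Arguments. Unset Strict Implicit. Unset Printing Implicit Defensive.

(* Actions of agent i: noop or decide_i(v). The agent index is implicit
   (the action is always performed by the agent whose protocol outputs it). *)
Inductive action (V : Type) : Type :=
| Noop : action V
| Decide : V -> action V.
Arguments Noop {V}.

(* Information exchange E = (L_i, I_i, M_i, mu_i, delta_i)_i, with the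
   projections init_i / time_i of local states (None = the special state
   `crashed`, which has no init/time field). *)
Record InfoExchange (n : nat) (V : Type) := {
  lstate : 'I_n -> Type;
  linit : forall i, lstate i -> Prop;
  msg : 'I_n -> Type;
  mbot : forall i, msg i;
  mu : forall i, lstate i -> action V -> 'I_n -> msg i;
  delta : forall i, lstate i -> action V -> (forall j, msg j) -> lstate i;
  init_pref : forall i, lstate i -> option V;
  ltime : forall i, lstate i -> option nat;
  delta_init : forall (i : 'I_n) s a ms, init_pref (@delta i s a ms) = init_pref s;
  delta_time : forall (i : 'I_n) s a ms t,
      ltime s = Some t -> ltime (@delta i s a ms) = Some t.+1
}.

(* Delta^t, Delta^r act on the message
   sent from i to j, which lies in M_i (and must again lie in M_i, being the
   i-th component of the message tuple fed to delta_j). *)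
Record Adversary n V (E : InfoExchange n V) := {
  adv_t : nat -> forall i j : 'I_n, msg E i -> msg E i;
  adv_r : nat -> forall i j : 'I_n, msg E i -> msg E i;
  adv_s : nat -> forall i : 'I_n, lstate E i -> lstate E i
}.

Record FailureModel n V (E : InfoExchange n V) := {
  estate : Type;
  einit : estate -> Prop;
  einit_ne : exists s, einit s;
  edelta : estate -> ('I_n -> action V) -> estate;
  Adv : Adversary E -> Prop;
  Adv_ne : exists a, Adv a;
  adv_s_time : forall a, Adv a -> forall k i s,
      ltime (@adv_s _ _ _ a k i s) = ltime s
}.

Definition protocol n V (E : InfoExchange n V) := forall i : 'I_n, lstate E i -> action V.

Record gstate n V (E : InfoExchange n V) (F : FailureModel E) := {
  genv : estate F;
  gadv : Adversary E;
  gloc : forall i, lstate E i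
}.

Definition run n V (E : InfoExchange n V) (F : FailureModel E) := nat -> gstate F.

Section Runs.
Variables (n : nat) (V : Type) (E : InfoExchange n V) (F : FailureModel E).
Variable P : protocol E.

Definition act (r : run F) (i : 'I_n) (k : nat) : action V := P (gloc (r k) i).

Definition is_run (r : run F) : Prop :=
  einit (genv (r 0)) /\ Adv F (gadv (r 0)) /\ (forall i, linit (gloc (r 0) i)) /\
  forall k,
    let al := gadv (r k) in
    genv (r k.+1) = edelta (genv (r k)) (act r ^~ k) /\
    gadv (r k.+1) = al /\
    forall j, gloc (r k.+1) j =
      @adv_s _ _ _ al k j
        (delta (gloc (r k) j) (act r j k)
           (fun i => @adv_r _ _ _ al k i j
                       (@adv_t _ _ _ al k i j (mu (gloc (r k) i) (act r i k) j)))).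

Definition indexical := run F -> nat -> {set 'I_n}.

Definition valid (phi : run F -> nat -> Prop) : Prop :=
  forall r, is_run r -> forall m, phi r m.

Definition SBA_valid (S : indexical) : Prop :=
  forall r, is_run r ->
    (forall i m m' v v', act r i m = Decide v -> act r i m' = Decide v' -> m = m') /\
    (forall m i v, i \in S r m -> act r i m = Decide v ->
        forall j, j \in S r m -> act r j m = Decide v) /\
    (forall m i v, i \in S r m -> act r i m = Decide v ->
        exists j, init_pref (gloc (r 0) j) = Some v).

End Runs.

From mathcomp Require Import all_boot.
Set Implicit Arguments. Unset Strict Implicit. Unset Printing Implicit Defensive.

(* An agent's action depends only on its local state.  For two agents of T
   at (r, m), hypothesis (a) gives a run r' in which both have the same local
   states as in r and both lie in S, so simultaneous agreement for S at
   (r', m) transfers back to r.  For validity, (b) and (c) yield an agent of S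
   that lies in T, hence (by agreement for T) decides the same value.
   Unique-Decision does not involve S and carries over unchanged. *)

Section Transfer.

Variables (n : nat) (V : Type) (E : InfoExchange n V) (F : FailureModel E).
Variable P : protocol E.
Implicit Types (r : run F) (S T : indexical F).

Definition agrees_at S r m : Prop :=
  forall i v, i \in S r m -> act P r i m = Decide v ->
    forall j, j \in S r m -> act P r j m = Decide v.

Definition valid_decisions_at S r m : Prop :=
  forall i v, i \in S r m -> act P r i m = Decide v ->
    exists j, init_pref (gloc (r 0) j) = Some v.

Lemma act_local r r' i m :
  gloc (r m) i = gloc (r' m) i -> act P r i m = act P r' i m.
Proof. by rewrite /act => ->. Qed.

Lemma agrees_at_transfer S T r m :
  (forall i j, i \in T r m -> j \in T r m ->
     exists r', is_run P r' /\
       gloc (r m) i = gloc (r' m) i /\ gloc (r m) j = gloc (r' m) j /\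
       i \in S r' m /\ j \in S r' m) ->
  (forall r', is_run P r' -> agrees_at S r' m) ->
  agrees_at T r m.
Proof.
move=> joint agreeS i v Ti dec_i j Tj.
have [r' [run_r' [eq_i [eq_j [Si Sj]]]]] := joint i j Ti Tj.
rewrite (act_local eq_j); apply: (agreeS r' run_r' i v Si _ j Sj).
by rewrite -(act_local eq_i).
Qed.

Lemma valid_decisions_at_transfer S T r m :
  S r m \subset T r m -> (T r m != set0 -> S r m != set0) ->
  agrees_at T r m -> valid_decisions_at S r m -> valid_decisions_at T r m.
Proof.
move=> subST nonemptyS agreeT validS i v Ti dec_i.
have /set0Pn [k Sk] : S r m != set0 by apply/nonemptyS/set0Pn; exists i.
exact: validS k v Sk (agreeT i v Ti dec_i k (subsetP subST k Sk)).
Qed.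

End Transfer.

Theorem proposition4 (n : nat) (V : Type) (E : InfoExchange n V)
    (F : FailureModel E) (P : protocol E) (S T : indexical F) :
  (* (a) *)
  (forall r, is_run P r -> forall m (i j : 'I_n),
      i \in T r m -> j \in T r m ->
      exists r', is_run P r' /\
        gloc (r m) i = gloc (r' m) i /\ gloc (r m) j = gloc (r' m) j /\
        i \in S r' m /\ j \in S r' m) ->
  (* (b) S subset T valid *)
  valid P (fun r m => S r m \subset T r m) ->
  (* (c) T <> empty => S <> empty valid *)
  valid P (fun r m => T r m != set0 -> S r m != set0) ->
  SBA_valid P S -> SBA_valid P T.
Proof.
move=> joint subST nonemptyS sbaS r run_r.
have [unique_decision [_ validS]] := sbaS r run_r.
have agreeT m : agrees_at P T r m.
  apply: (agrees_at_transfer (joint r run_r m)) => r' run_r'.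
  exact: (sbaS r' run_r').2.1 m.
split; first exact: unique_decision.
split=> [|m]; first exact: agreeT.
exact: valid_decisions_at_transfer (subST r run_r m) (nonemptyS r run_r m)
  (agreeT m) (validS m).
Qed.
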